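(* The theory $\mathsf{MLS}$ (Multi-Level Syllogistic) is convex. That is, for every conjunction $\varphi$ of $\mathsf{MLS}$-literals and every finite nonempty set $\mathcal{E}$ of equalities between set variables, if every set assignment that satisfies $\varphi$ also satisfies $\bigvee \mathcal{E}$, then there is some equality $x = y$ in $\mathcal{E}$ such that every set assignment that satisfies $\varphi$ also satisfies $x = y$.
   Context: $\mathsf{MLS}$ is the quantifier-free propositional closure of atoms of the forms $x=\varnothing$, $x=y$, $x\subseteq y$, $x\in y$, $x=y\setminus z$, $x=y\cup z$, $x=y\cap z$, where $x,y,z$ are set variables; an $\mathsf{MLS}$-literal is such an atom or its negation. A set assignment is a map from a finite set of set variables into the von Neumann universe $\mathcal{V}=\bigcup_{\alpha}\mathcal{V}_\alpha$, with $\mathcal{V}_\alpha=\bigcup_{\beta<\alpha}\mathcal{P}(\mathcal{V}_\beta)$; symbols are interpreted with their usual set-theoretic meaning ($\in$ as membership, $\setminus,\cup,\cap$ as set difference, union, intersection, $=$ as equality, $\subseteq$ as inclusion, $\varnothing$ as the empty set), and propositional connectives as usual. A set assignment whose domain contains the variables of a formula satisfies it if the formula evaluates to true. *)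

From Stdlib Require Import List.
Import ListNotations.

(* Iterative (well-founded) sets: a set is given by an index type and a
   family of elements. *)
Inductive V : Type :=
  sup : forall (A : Type), (A -> V) -> V.

Fixpoint Veq (x y : V) {struct x} : Prop :=
  match x, y with
  | sup A f, sup B g =>
      (forall a : A, exists b : B, Veq (f a) (g b)) /\
      (forall b : B, exists a : A, Veq (f a) (g b))
  end.

Definition Vin (x y : V) : Prop :=
  match y with
  | sup B g => exists b : B, Veq x (g b)
  end.

Definition var := nat.

Inductive atom : Type :=
  | AEmpty : var -> atom
  | AEq    : var -> var -> atom
  | ASub   : var -> var -> atom
  | AIn    : var -> var -> atom
  | ADiff  : var -> var -> var -> atom
  | AUnion : var -> var -> var -> atom
  | AInter : var -> var -> var -> atom.

Inductive literal : Type :=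
  | Pos : atom -> literal
  | Neg : atom -> literal.

(* A set assignment (total on variables; only the variables of the formula
   matter). *)
Definition assignment := var -> V.

Definition sat_atom (M : assignment) (a : atom) : Prop :=
  match a with
  | AEmpty x => forall w, ~ Vin w (M x)
  | AEq x y => Veq (M x) (M y)
  | ASub x y => forall w, Vin w (M x) -> Vin w (M y)
  | AIn x y => Vin (M x) (M y)
  | ADiff x y z => forall w, Vin w (M x) <-> (Vin w (M y) /\ ~ Vin w (M z))
  | AUnion x y z => forall w, Vin w (M x) <-> (Vin w (M y) \/ Vin w (M z))
  | AInter x y z => forall w, Vin w (M x) <-> (Vin w (M y) /\ Vin w (M z))
  end.

Definition sat_literal (M : assignment) (l : literal) : Prop :=
  match l with
  | Pos a => sat_atom M a
  | Neg a => ~ sat_atom M a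
  end.

Definition sat_conj (M : assignment) (phi : list literal) : Prop :=
  forall l, In l phi -> sat_literal M l.

Definition sat_eq (M : assignment) (e : var * var) : Prop :=
  Veq (M (fst e)) (M (snd e)).

Definition sat_disj (M : assignment) (E : list (var * var)) : Prop :=
  exists e, In e E /\ sat_eq M e.

From Stdlib Require Import List Classical FunctionalExtensionality Inverse_Image.

(* Given a model M0 of phi, build a model Mc in which Mc z consists of copies
   Mc z' of the sets M0 z' in M0 z, together with a fresh "tag" for every
   membership profile p ⊆ Var (the set of variables whose value contains a
   given element) realized by an element of some model of phi; the tag of p
   is put exactly into the Mc z with z ∈ p.  A literal other than a
   membership depends only on which profiles a model realizes, and the
   nonempty profiles of Mc are exactly those realized across all models of
   phi; membership literals are copied from M0.  So Mc is a model of phi in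
   which an equality holds only if it holds in every model of phi, and
   convexity follows by applying the hypothesis to Mc. *)

Lemma Veq_refl s : Veq s s.
Proof. induction s as [A f IH]; simpl; split; intro a; exists a; apply IH. Qed.

Lemma Veq_sym : forall s t, Veq s t -> Veq t s.
Proof.
  induction s as [A f IH]; destruct t as [B g]; simpl; intros [H1 H2]; split.
  - intro b; destruct (H2 b) as [a Ha]; exists a; apply IH; exact Ha.
  - intro a; destruct (H1 a) as [b Hb]; exists b; apply IH; exact Hb.
Qed.

Lemma Veq_trans : forall s t u, Veq s t -> Veq t u -> Veq s u.
Proof.
  induction s as [A f IH]; destruct t as [B g]; destruct u as [C h]; simpl;
    intros [H1 H2] [H3 H4]; split.
  - intro a; destruct (H1 a) as [b Hb]; destruct (H3 b) as [c Hc];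
      exists c; eapply IH; eauto.
  - intro c; destruct (H4 c) as [b Hb]; destruct (H2 b) as [a Ha];
      exists a; eapply IH; eauto.
Qed.

Lemma Vin_Veq_l a b c : Veq a b -> Vin a c -> Vin b c.
Proof.
  destruct c as [C h]; simpl; intros H [k Hk]; exists k.
  eapply Veq_trans; [apply Veq_sym; exact H | exact Hk].
Qed.

Lemma Vin_Veq_r a b c : Veq b c -> Vin a b -> Vin a c.
Proof.
  destruct b as [B g]; destruct c as [C h]; simpl; intros [H1 _] [j Hj].
  destruct (H1 j) as [k Hk]; exists k; eapply Veq_trans; eauto.
Qed.

Lemma Veq_Vin_iff a b : Veq a b -> forall w, Vin w a <-> Vin w b.
Proof.
  intros H w; split; apply Vin_Veq_r; [exact H | apply Veq_sym; exact H].
Qed.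

Lemma Veq_ext a b : (forall w, Vin w a <-> Vin w b) -> Veq a b.
Proof.
  destruct a as [A f]; destruct b as [B g]; intro H; simpl; split.
  - intro x; apply (H (f x)); exists x; apply Veq_refl.
  - intro y; destruct (proj2 (H (g y))) as [x Hx].
    + exists y; apply Veq_refl.
    + exists x; apply Veq_sym; exact Hx.
Qed.

Lemma Vin_wf : well_founded Vin.
Proof.
  intro s; induction s as [A f IH]; constructor; intros y [a Ha].
  constructor; intros u Hu; apply (Acc_inv (IH a)); eapply Vin_Veq_r; eauto.
Qed.

Lemma Vin_asym x y : Vin x y -> ~ Vin y x.
Proof.
  revert y; induction (Vin_wf x) as [x _ IH]; intros y Hxy Hyx.
  exact (IH y Hyx x Hyx Hxy).
Qed.

Lemma Vin_irrefl x : ~ Vin x x.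
Proof. intro H; exact (Vin_asym x x H H). Qed.

Definition profile (M : assignment) (w : V) (x : var) : Prop := Vin w (M x).

Definition boolean (a : atom) : Prop :=
  match a with AIn _ _ => False | _ => True end.

Lemma boolean_or_AIn a : boolean a \/ exists x y, a = AIn x y.
Proof. destruct a; simpl; eauto. Qed.

Definition sat_atom_at (a : atom) (p : var -> Prop) : Prop :=
  match a with
  | AEmpty x => ~ p x
  | AEq x y => p x <-> p y
  | ASub x y => p x -> p y
  | AIn _ _ => True
  | ADiff x y z => p x <-> p y /\ ~ p z
  | AUnion x y z => p x <-> p y \/ p z
  | AInter x y z => p x <-> p y /\ p z
  end.

Lemma sat_atom_at_empty a : sat_atom_at a (fun _ => False).
Proof. destruct a; simpl; tauto. Qed.

Lemma sat_atom_at_iff a p q :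
  (forall x, p x <-> q x) -> sat_atom_at a p -> sat_atom_at a q.
Proof. intro H; destruct a; simpl; rewrite ?H; tauto. Qed.

Lemma sat_atom_profiles M a :
  boolean a -> sat_atom M a <-> forall w, sat_atom_at a (profile M w).
Proof.
  destruct a; simpl; intros Hb; try contradiction; try apply iff_refl.
  split; [apply Veq_Vin_iff | apply Veq_ext].
Qed.

Lemma sat_atom_of_covered_profiles (Ms : assignment -> Prop) M a :
  boolean a ->
  (forall N, Ms N -> sat_atom N a) ->
  (forall w, (forall x, ~ profile M w x) \/
             exists N e, Ms N /\ forall x, profile M w x <-> profile N e x) ->
  sat_atom M a.
Proof.
  intros Hb Hall Hcov; apply sat_atom_profiles; [exact Hb |]; intro w.
  destruct (Hcov w) as [Hempty | (N & e & HN & Hw)].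
  - apply (sat_atom_at_iff a (fun _ => False)); [firstorder | apply sat_atom_at_empty].
  - apply (sat_atom_at_iff a (profile N e)); [firstorder |].
    exact (proj1 (sat_atom_profiles N a Hb) (Hall N HN) e).
Qed.

Fixpoint vnat (n : nat) : V :=
  match n with
  | 0 => sup False (fun f => match f with end)
  | S n => sup unit (fun _ => vnat n)
  end.

Definition vomega : V := sup nat vnat.

(* The element [vomega] keeps tags apart from the sets [Mc z] below. *)
Definition tag (p : var -> Prop) : V :=
  sup (option {x : var | p x})
      (fun o => match o with None => vomega | Some (exist _ x _) => vnat x end).

Lemma vnat_inj : forall x y, Veq (vnat x) (vnat y) -> x = y.
Proof.
  induction x; destruct y; simpl; intros [H1 H2]; auto.
  - destruct (H2 tt) as [[] _].
  - destruct (H1 tt) as [[] _].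
  - destruct (H1 tt) as [u Hu]; f_equal; auto.
Qed.

Lemma vnat_in_vomega n : Vin (vnat n) vomega.
Proof. exists n; apply Veq_refl. Qed.

Lemma vomega_in_tag p : Vin vomega (tag p).
Proof. exists None; apply Veq_refl. Qed.

Lemma tag_inj p q : Veq (tag p) (tag q) -> forall x, p x -> q x.
Proof.
  intros H x hx.
  assert (Hin : Vin (vnat x) (tag q)).
  { eapply Vin_Veq_r; [exact H |]; exists (Some (exist _ x hx)); apply Veq_refl. }
  destruct Hin as [[[y hy] |] Hy].
  - apply vnat_inj in Hy; subst; exact hy.
  - exfalso; apply (Vin_irrefl vomega).
    apply (Vin_Veq_l (vnat x)); [exact Hy | apply vnat_in_vomega].
Qed.

Section CombinedModel.

Variable phi : list literal.
Variable M0 : assignment.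
Hypothesis M0_sat : sat_conj M0 phi.

Definition realized (p : var -> Prop) : Prop :=
  exists N e, sat_conj N phi /\ forall x, p x <-> profile N e x.

Definition Vin_M0 (z' z : var) : Prop := Vin (M0 z') (M0 z).

Lemma Vin_M0_wf : well_founded Vin_M0.
Proof. exact (wf_inverse_image _ _ Vin M0 Vin_wf). Qed.

Definition Mc_step (z : var) (rec : forall z', Vin_M0 z' z -> V) : V :=
  sup ({z' : var | Vin_M0 z' z} + {p : var -> Prop | realized p /\ p z})
      (fun i => match i with
                | inl (exist _ z' h) => rec z' h
                | inr (exist _ p _) => tag p
                end).

Definition Mc : assignment := Fix Vin_M0_wf (fun _ => V) Mc_step.

Lemma Mc_unfold z : Mc z = Mc_step z (fun z' _ => Mc z').
Proof.
  apply (Fix_eq Vin_M0_wf (fun _ => V) Mc_step); intros x f g H.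
  unfold Mc_step; f_equal; apply functional_extensionality.
  intros [[z' h] | [p hp]]; auto.
Qed.

Lemma Vin_Mc w z :
  Vin w (Mc z) <->
  (exists z', Vin_M0 z' z /\ Veq w (Mc z')) \/
  (exists p, (realized p /\ p z) /\ Veq w (tag p)).
Proof.
  rewrite Mc_unfold; simpl; split.
  - intros [[[z' h] | [p hp]] H]; [left | right]; eauto.
  - intros [[z' [h H]] | [p [hp H]]].
    + exists (inl (exist _ z' h)); exact H.
    + exists (inr (exist _ p hp)); exact H.
Qed.

Lemma tag_in_Mc p z : realized p -> p z -> Vin (tag p) (Mc z).
Proof. intros Hp Hz; apply Vin_Mc; right; exists p; split; [auto | apply Veq_refl]. Qed.

Lemma Mc_nonempty_tag w z : Vin w (Mc z) -> exists p, realized p /\ p z.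
Proof.
  intro Hw; apply Vin_Mc in Hw as [[z' [h _]] | [p [hp _]]]; [| eauto].
  exists (profile M0 (M0 z')); split; [| exact h].
  exists M0, (M0 z'); split; [exact M0_sat | tauto].
Qed.

(* If [tag p = Mc z] then [vomega ∈ Mc z]; both ways [vomega] can be an
   element of some [Mc z] close a membership cycle of length at most two. *)
Lemma tag_neq_Mc p z : ~ Veq (tag p) (Mc z).
Proof.
  intro H.
  assert (Hin : Vin vomega (Mc z)) by (eapply Vin_Veq_r; [exact H | apply vomega_in_tag]).
  apply Vin_Mc in Hin as [[z' [_ Hz']] | [q [_ Hq]]].
  - assert (H0 : Vin (vnat 0) (Mc z'))
      by (eapply Vin_Veq_r; [exact Hz' | apply vnat_in_vomega]).
    destruct (Mc_nonempty_tag _ _ H0) as [q [Hq Hqz']].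
    apply (Vin_asym vomega (tag q)); [apply vomega_in_tag |].
    eapply Vin_Veq_r; [apply Veq_sym; exact Hz' | apply tag_in_Mc; auto].
  - apply (Vin_irrefl vomega); eapply Vin_Veq_r; [apply Veq_sym; exact Hq |].
    apply vomega_in_tag.
Qed.

Lemma profile_Mc_tag p : realized p -> forall y, profile Mc (tag p) y <-> p y.
Proof.
  intros Hp y; split; [| apply tag_in_Mc; exact Hp].
  intro H; apply Vin_Mc in H as [[z' [_ H]] | [q [[_ hq] H]]].
  - exfalso; exact (tag_neq_Mc _ _ H).
  - eapply tag_inj; [apply Veq_sym; exact H | exact hq].
Qed.

Lemma realized_in_Mc N e :
  sat_conj N phi -> exists w, forall x, profile Mc w x <-> profile N e x.
Proof.
  intro HN; exists (tag (profile N e)); apply profile_Mc_tag.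
  exists N, e; split; [exact HN | tauto].
Qed.

Lemma Mc_reflects a N :
  boolean a -> sat_atom Mc a -> sat_conj N phi -> sat_atom N a.
Proof.
  intros Hb Ha HN; apply (sat_atom_of_covered_profiles (fun N' => N' = Mc)); auto.
  - intros N' ->; exact Ha.
  - intro e; right; destruct (realized_in_Mc N e HN) as [w Hw].
    exists Mc, w; split; [reflexivity | firstorder].
Qed.

Lemma Mc_profiles_realized w :
  (forall x, ~ profile Mc w x) \/
  exists N e, sat_conj N phi /\ forall x, profile Mc w x <-> profile N e x.
Proof.
  destruct (classic (exists x, profile Mc w x)) as [[x Hx] | Hn]; [right | firstorder].
  apply Vin_Mc in Hx as [[z' [h H]] | [p [[Hp _] H]]].
  - exists M0, (M0 z'); split; [exact M0_sat |]; intro y; split; intro Hy.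
    + apply Vin_Mc in Hy as [[z'' [h' H']] | [q [_ H']]].
      * assert (E : Veq (M0 z'') (M0 z')).
        { apply (Mc_reflects (AEq z'' z')); simpl; auto.
          eapply Veq_trans; [apply Veq_sym; exact H' | exact H]. }
        eapply Vin_Veq_l; [exact E | exact h'].
      * exfalso; apply (tag_neq_Mc q z').
        eapply Veq_trans; [apply Veq_sym; exact H' | exact H].
    + apply Vin_Mc; left; exists z'; auto.
  - destruct Hp as (N & e & HN & He).
    exists N, e; split; [exact HN |]; intro y; rewrite <- He.
    rewrite <- (profile_Mc_tag p) by (exists N, e; auto).
    split; apply Vin_Veq_l; [exact H | apply Veq_sym; exact H].
Qed.

Lemma Mc_Vin_iff x y : Vin (Mc x) (Mc y) <-> Vin (M0 x) (M0 y).
Proof.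
  split; intro H.
  - apply Vin_Mc in H as [[z' [h H]] | [p [_ H]]].
    + eapply Vin_Veq_l; [| exact h].
      apply (Mc_reflects (AEq z' x)); simpl; auto; apply Veq_sym; exact H.
    + exfalso; apply (tag_neq_Mc p x); apply Veq_sym; exact H.
  - apply Vin_Mc; left; exists x; split; [exact H | apply Veq_refl].
Qed.

Lemma Mc_sat : sat_conj Mc phi.
Proof.
  intros l Hl; destruct l as [a | a]; simpl;
    destruct (boolean_or_AIn a) as [Hb | (x & y & ->)].
  - apply (sat_atom_of_covered_profiles (fun N => sat_conj N phi)); auto.
    + intros N HN; exact (HN _ Hl).
    + exact Mc_profiles_realized.
  - apply Mc_Vin_iff; exact (M0_sat _ Hl).
  - intro Ha; exact (M0_sat _ Hl (Mc_reflects a M0 Hb Ha M0_sat)).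
  - intro Ha; exact (M0_sat _ Hl (proj1 (Mc_Vin_iff x y) Ha)).
Qed.

End CombinedModel.

Theorem theorem12 (phi : list literal) (E : list (var * var)) :
  E <> nil ->
  (forall M : assignment, sat_conj M phi -> sat_disj M E) ->
  exists e, In e E /\ (forall M : assignment, sat_conj M phi -> sat_eq M e).
Proof.
  intros HE Hdisj.
  destruct (classic (exists M0, sat_conj M0 phi)) as [[M0 HM0] | Hunsat].
  - destruct (Hdisj _ (Mc_sat phi M0 HM0)) as [[x y] [He Hxy]].
    exists (x, y); split; [exact He |]; intros N HN.
    exact (Mc_reflects phi M0 HM0 (AEq x y) N I Hxy HN).
  - destruct E as [| e E']; [congruence |].
    exists e; split; [left; reflexivity |]; intros N HN.
    exfalso; apply Hunsat; eauto.
Qed.
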